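(* Let $A>0$, $\phi>0$, $0<\gamma<1$, and $\alpha,\beta>0$ with $\alpha+\beta<1$. Consider the map $F_S:(0,\infty)^2\to(0,\infty)^2$, $$F_S(k,N)=\left(A\left[\left(\frac{\alpha}{1-\alpha}\right)\phi\, k^{2}N^{\gamma}\right]^{\alpha}k^{\beta},\ \left(\frac{1-\alpha}{2\phi k}\right)N^{1-\gamma}\right),$$ which defines the dynamical system $(k_{t+1},N_{t+1})=F_S(k_t,N_t)$. Then $F_S$ has a unique fixed point $(\bar k_S,\bar N_S)$ with $\bar k_S>0$, $\bar N_S>0$, and it is given by $$\bar k_S=\left(A^{1/\alpha}\frac{\alpha}{2}\right)^{\frac{\alpha}{1-\beta-\alpha}},\qquad \bar N_S=A^{\frac{-1}{(1-\beta-\alpha)\gamma}}\left(\frac{1-\alpha}{2\phi}\right)^{\frac{1-\beta-2\alpha}{(1-\beta-\alpha)\gamma}}\left[\left(\frac{\alpha}{1-\alpha}\right)\phi\right]^{\frac{-\alpha}{(1-\beta-\alpha)\gamma}}.$$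
   Context: This is an overlapping-generations model in which $k_t$ is human capital per adult and $N_t$ the adult population at generation $t$, in the case where the father's and mother's childcare times are perfect substitutes. Households' optimal fertility and education spending are $n^*(k,N)=\frac{1-\alpha}{2\phi kN^{\gamma}}$ and $e^*(k,N)=\frac{\alpha}{1-\alpha}\phi k^2N^{\gamma}$, and the dynamics are $k_{t+1}=A\,e^*(k_t,N_t)^{\alpha}k_t^{\beta}$, $N_{t+1}=n^*(k_t,N_t)N_t$, which is the map $F_S$ above. An ''economically meaningful'' equilibrium is a fixed point with both coordinates strictly positive. *)

From Stdlib Require Import Reals.
Open Scope R_scope.

Definition F_S (A phi gamma alpha beta : R) (k N : R) : R * R :=
  ( A * Rpower ((alpha / (1 - alpha)) * phi * (k ^ 2) * Rpower N gamma) alpha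
      * Rpower k beta,
    ((1 - alpha) / (2 * phi * k)) * Rpower N (1 - gamma) ).

Definition kbar_S (A alpha beta : R) : R :=
  Rpower (Rpower A (1 / alpha) * (alpha / 2)) (alpha / (1 - beta - alpha)).

Definition Nbar_S (A phi gamma alpha beta : R) : R :=
  Rpower A (-1 / ((1 - beta - alpha) * gamma))
  * Rpower ((1 - alpha) / (2 * phi))
           ((1 - beta - 2 * alpha) / ((1 - beta - alpha) * gamma))
  * Rpower ((alpha / (1 - alpha)) * phi) (- alpha / ((1 - beta - alpha) * gamma)).

(* Taking logarithms turns the fixed-point equation F_S(k, N) = (k, N) on the
   positive quadrant into a linear system in (ln k, ln N) with determinant
   (1 - beta - alpha) * gamma <> 0, so it has exactly one solution.  Solving it,
   and using (alpha / (1 - alpha)) phi * (1 - alpha) / (2 phi) = alpha / 2,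
   identifies that solution with (ln kbar_S, ln Nbar_S). *)

From Stdlib Require Import Reals Lra.
Open Scope R_scope.

Lemma log_fixed_point_iff (a c d al be ga x y : R) :
  al <> 0 -> ga <> 0 -> 1 - be - al <> 0 ->
  (a + al * (c + 2 * x + ga * y) + be * x = x /\ d - x + (1 - ga) * y = y) <->
  (x = al / (1 - be - al) * (1 / al * a + (c + d)) /\
   y = -1 / ((1 - be - al) * ga) * a
       + (1 - be - 2 * al) / ((1 - be - al) * ga) * d
       + (- al / ((1 - be - al) * ga)) * c).
Proof.
  intros Hal Hga Hdet; split.
  - intros [Ex Ey].
    assert (Ey' : ga * y = d - x) by lra.
    rewrite Ey' in Ex.
    assert (Ex' : (1 - be - al) * x = a + al * (c + d)) by lra.
    assert (Hx : x = al / (1 - be - al) * (1 / al * a + (c + d))).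
    { apply (Rmult_eq_reg_l (1 - be - al)); [|exact Hdet].
      rewrite Ex'; field; auto. }
    split; [exact Hx|].
    apply (Rmult_eq_reg_l ga); [|exact Hga].
    rewrite Ey', Hx; field; auto.
  - intros [-> ->]; split; field; auto.
Qed.

Lemma Rpower_pos (x y : R) : 0 < Rpower x y.
Proof. apply exp_pos. Qed.

Lemma eq_iff_ln_eq (u v : R) : 0 < u -> 0 < v -> u = v <-> ln u = ln v.
Proof. intros Hu Hv; split; [intros ->; reflexivity | now apply ln_inv]. Qed.

Section SteadyState.

Variables A phi gamma alpha beta : R.
Hypothesis A_gt0 : 0 < A.
Hypothesis phi_gt0 : 0 < phi.
Hypothesis alpha_gt0 : 0 < alpha.
Hypothesis alpha_lt1 : alpha < 1.

Let c := alpha / (1 - alpha) * phi.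
Let d := (1 - alpha) / (2 * phi).

Lemma c_gt0 : 0 < c.
Proof. apply Rmult_lt_0_compat; [apply Rdiv_lt_0_compat|]; lra. Qed.

Lemma d_gt0 : 0 < d.
Proof. apply Rdiv_lt_0_compat; lra. Qed.

Lemma F_S_pos (k N : R) : 0 < k ->
  0 < fst (F_S A phi gamma alpha beta k N) /\
  0 < snd (F_S A phi gamma alpha beta k N).
Proof.
  intros Hk; split; simpl.
  - repeat apply Rmult_lt_0_compat; auto using Rpower_pos.
  - apply Rmult_lt_0_compat; [apply Rdiv_lt_0_compat|apply Rpower_pos]; try lra.
    repeat apply Rmult_lt_0_compat; lra.
Qed.

Lemma ln_F_S_fst (k N : R) : 0 < k ->
  ln (fst (F_S A phi gamma alpha beta k N))
  = ln A + alpha * (ln c + 2 * ln k + gamma * ln N) + beta * ln k.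
Proof.
  intros Hk; unfold F_S, fst; fold c.
  rewrite !ln_mult, !ln_Rpower, !ln_mult, ln_pow, ln_Rpower;
    [simpl INR; ring | auto using Rpower_pos, c_gt0, pow_lt, Rmult_lt_0_compat ..].
Qed.

Lemma ln_F_S_snd (k N : R) : 0 < k ->
  ln (snd (F_S A phi gamma alpha beta k N)) = ln d - ln k + (1 - gamma) * ln N.
Proof.
  intros Hk; unfold F_S, snd.
  replace ((1 - alpha) / (2 * phi * k)) with (d * / k) by (unfold d; field; lra).
  rewrite !ln_mult, ln_Rinv, ln_Rpower;
    [ring | auto using Rpower_pos, d_gt0, Rinv_0_lt_compat, Rmult_lt_0_compat ..].
Qed.

Lemma ln_kbar_S :
  ln (kbar_S A alpha beta)
  = alpha / (1 - beta - alpha) * (1 / alpha * ln A + (ln c + ln d)).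
Proof.
  unfold kbar_S.
  replace (alpha / 2) with (c * d) by (unfold c, d; field; lra).
  rewrite ln_Rpower, ln_mult, ln_Rpower, ln_mult;
    auto using Rpower_pos, c_gt0, d_gt0, Rmult_lt_0_compat.
Qed.

Lemma ln_Nbar_S :
  ln (Nbar_S A phi gamma alpha beta)
  = -1 / ((1 - beta - alpha) * gamma) * ln A
    + (1 - beta - 2 * alpha) / ((1 - beta - alpha) * gamma) * ln d
    + (- alpha / ((1 - beta - alpha) * gamma)) * ln c.
Proof.
  unfold Nbar_S.
  rewrite !ln_mult, !ln_Rpower; auto using Rpower_pos, Rmult_lt_0_compat.
Qed.

End SteadyState.

Theorem proposition1 (A phi gamma alpha beta : R) :
  0 < A -> 0 < phi -> 0 < gamma < 1 -> 0 < alpha -> 0 < beta ->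
  alpha + beta < 1 ->
  0 < kbar_S A alpha beta /\ 0 < Nbar_S A phi gamma alpha beta /\
  (forall k N : R, 0 < k -> 0 < N ->
     (F_S A phi gamma alpha beta k N = (k, N) <->
      (k = kbar_S A alpha beta /\ N = Nbar_S A phi gamma alpha beta))).
Proof.
  intros HA Hphi [Hgamma _] Halpha Hbeta Hab.
  assert (Hkbar : 0 < kbar_S A alpha beta) by apply Rpower_pos.
  assert (HNbar : 0 < Nbar_S A phi gamma alpha beta)
    by (unfold Nbar_S; auto using Rpower_pos, Rmult_lt_0_compat).
  split; [exact Hkbar|]; split; [exact HNbar|].
  intros k N Hk HN.
  destruct (F_S_pos A phi gamma alpha beta HA Hphi ltac:(lra) k N Hk) as [H1 H2].
  rewrite (surjective_pairing (F_S _ _ _ _ _ k N)), pair_equal_spec.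
  rewrite (eq_iff_ln_eq _ _ H1 Hk), (eq_iff_ln_eq _ _ H2 HN),
    (eq_iff_ln_eq _ _ Hk Hkbar), (eq_iff_ln_eq _ _ HN HNbar).
  rewrite ln_F_S_fst, ln_F_S_snd, (ln_kbar_S A phi), ln_Nbar_S by lra.
  apply log_fixed_point_iff; lra.
Qed.
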